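(* Let $(X,\phi)$ be a flow on a compact metric space $(X,d)$. For every $\epsilon>0$ the limit $\lim_{t\to\infty}\frac1t\log\#(\phi,X,d_t,\epsilon)$ exists, and \begin{align*} \overline{\mathrm{mdim}}_M(\phi,X,d)&=\limsup_{\epsilon\to0}\lim_{t\to\infty}\frac{\log\#(\phi,X,d_t,\epsilon)}{t\log\frac1\epsilon}=\limsup_{\epsilon\to0}\limsup_{t\to\infty}\frac{\log s_t(\phi,X,d,\epsilon)}{t\log\frac1\epsilon},\\ \underline{\mathrm{mdim}}_M(\phi,X,d)&=\liminf_{\epsilon\to0}\lim_{t\to\infty}\frac{\log\#(\phi,X,d_t,\epsilon)}{t\log\frac1\epsilon}=\liminf_{\epsilon\to0}\limsup_{t\to\infty}\frac{\log s_t(\phi,X,d,\epsilon)}{t\log\frac1\epsilon}. \end{align*}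
   Context: A flow: $\phi:X\times\mathbb{R}\to X$ continuous, $\phi_t(x)=\phi(x,t)$, $\phi_0=\mathrm{id}$, $\phi_{t+s}=\phi_t\circ\phi_s$. $d_t(x,y)=\max_{s\in[0,t]}d(\phi_sx,\phi_sy)$. $\#(\phi,X,d_t,\epsilon)$ is the minimal cardinality of an open cover of $X$ each of whose members has $d_t$-diameter less than $\epsilon$. $s_t(\phi,X,d,\epsilon)$ is the maximal cardinality of a set $F\subset X$ with $d_t(x,y)\ge\epsilon$ for all distinct $x,y\in F$. $r_t(\phi,X,d,\epsilon)$ is the minimal cardinality of $E\subset X$ such that every $x\in X$ has $y\in E$ with $d_t(x,y)<\epsilon$; $r(\phi,X,d,\epsilon)=\limsup_{t\to\infty}\frac1t\log r_t(\phi,X,d,\epsilon)$; $\overline{\mathrm{mdim}}_M(\phi,X,d)=\limsup_{\epsilon\to0}\frac{r(\phi,X,d,\epsilon)}{\log(1/\epsilon)}$ and $\underline{\mathrm{mdim}}_M$ is the same with $\liminf_{\epsilon\to0}$. *)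

From HB Require Import structures.
From mathcomp Require Import all_boot all_order all_algebra.
From mathcomp Require Import all_classical all_reals all_analysis.
Set Implicit Arguments. Unset Strict Implicit. Unset Printing Implicit Defensive.
Import Order.TTheory GRing.Theory Num.Theory.
Import numFieldNormedType.Exports.
Local Open Scope classical_set_scope.
Local Open Scope ring_scope.

Section FlowDefs.
Variables (R : realType) (X : Type).
Implicit Types (d : X -> X -> R) (phi : X -> R -> X).

Definition is_metric d : Prop :=
  [/\ forall x y, d x y = 0 <-> x = y,
      forall x y, d x y = d y x &
      forall x y z, d x z <= d x y + d y z].

Definition metric_open d (U : set X) : Prop :=
  forall x, U x -> exists2 r : R, 0 < r & forall y, d x y < r -> U y.

Definition metric_compact d : Prop :=
  forall (I : Type) (U : I -> set X),
    (forall i, metric_open d (U i)) -> (forall x, exists i, U i x) ->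
    exists (n : nat) (f : 'I_n -> I), forall x, exists k, U (f k) x.

(* phi is a (continuous) flow on (X,d): phi x t = phi_t(x) *)
Definition is_flow d phi : Prop :=
  [/\ (forall x t (e : R), 0 < e -> exists2 del : R, 0 < del &
         forall y s, d x y < del -> `|t - s| < del -> d (phi x t) (phi y s) < e),
      (forall x, phi x 0 = x) &
      (forall x t s, phi x (t + s) = phi (phi x s) t)].

Definition dist_t d phi (t : R) (x y : X) : R :=
  sup [set d (phi x s) (phi y s) | s in [set s : R | 0 <= s <= t]].

(* d_t-diameter of U (as an extended real; -oo for the empty set) *)
Definition diam_t d phi (t : R) (U : set X) : \bar R :=
  ereal_sup [set e : \bar R | exists x y, [/\ U x, U y & e = (dist_t d phi t x y)%:E]].

Definition cover_num d phi (t eps : R) : R :=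
  inf [set n%:R | n in [set n : nat | exists U : 'I_n -> set X,
        [/\ forall i, metric_open d (U i),
            forall x, exists i, U i x &
            forall i, (diam_t d phi t (U i) < eps%:E)%E]]].

Definition sep_num d phi (t eps : R) : R :=
  sup [set n%:R | n in [set n : nat | exists F : 'I_n -> X,
        injective F /\ forall i j, i != j -> eps <= dist_t d phi t (F i) (F j)]].

Definition span_num d phi (t eps : R) : R :=
  inf [set n%:R | n in [set n : nat | exists E : 'I_n -> X,
        forall x, exists i, dist_t d phi t x (E i) < eps]].

Definition span_rate d phi (eps : R) : \bar R :=
  limf_esup (fun t : R => (ln (span_num d phi t eps) / t)%:E) +oo.

Definition upper_mdim_M d phi : \bar R :=
  limf_esup (fun eps : R => (span_rate d phi eps * (ln (1 / eps))^-1%:E)%E) 0^'+.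

Definition lower_mdim_M d phi : \bar R :=
  limf_einf (fun eps : R => (span_rate d phi eps * (ln (1 / eps))^-1%:E)%E) 0^'+.

End FlowDefs.

From HB Require Import structures.
From mathcomp Require Import all_boot all_order all_algebra.
From mathcomp Require Import all_classical all_reals all_analysis.
From mathcomp Require Import ring lra.
Import Order.TTheory GRing.Theory Num.Theory.
Import numFieldNormedType.Exports.
Local Open Scope classical_set_scope.
Local Open Scope ring_scope.

(* The counting numbers satisfy r_t(eps) <= s_t(eps) <= #(d_t, eps) <= r_t(eps/3),
   and #(d_t, eps) is submultiplicative and nondecreasing in t, so by Fekete's
   lemma (1/t) log #(d_t, eps) converges.  Hence the three growth rates satisfy
   r(eps) <= s(eps) <= c(eps) <= r(eps/3).  After division by log(1/eps), the
   rescaling eps -> eps/3 only costs the factor log(3/eps)/log(1/eps) -> 1, so the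
   three normalised rates have the same limsup and the same liminf as eps -> 0. *)

Section limf_esup_einf.
Context {T : choiceType} {X : filteredType T} {R : realType}.
Implicit Types (f g : X -> \bar R) (F : set_system X).
Local Open Scope ereal_scope.

Lemma le_limf_esup F f g : Filter F ->
  (\forall x \near F, f x <= g x) -> limf_esup f F <= limf_esup g F.
Proof.
move=> FF fg; rewrite !limf_esupE; apply: le_ereal_inf_tmp => _ [V FV <-].
pose W := V `&` [set x | f x <= g x].
apply: (@le_trans _ _ (ereal_sup (f @` W))).
  by apply: ereal_inf_lbound; exists W => //; apply: filterI.
apply: ge_ereal_sup => _ [x [Vx fgx] <-].
by apply: le_trans fgx _; apply: ereal_sup_ubound; exists x.
Qed.

Lemma le_limf_einf F f g : Filter F ->
  (\forall x \near F, f x <= g x) -> limf_einf f F <= limf_einf g F.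
Proof.
move=> FF fg; rewrite /limf_einf leeN2; apply: le_limf_esup.
by apply: filterS fg => x; rewrite /= leeN2.
Qed.

Lemma limf_esupZl F f (k : R) : (0 < k)%R ->
  limf_esup (fun x => k%:E * f x) F = k%:E * limf_esup f F.
Proof.
move=> k0; rewrite !limf_esupE -ereal_inf_pZl //; congr ereal_inf.
rewrite [RHS]image_comp; apply: eq_imagel => V _ /=.
by rewrite -ereal_sup_pZl // image_comp.
Qed.

Lemma limf_einfZl F f (k : R) : (0 < k)%R ->
  limf_einf (fun x => k%:E * f x) F = k%:E * limf_einf f F.
Proof.
move=> k0; rewrite /limf_einf muleN -limf_esupZl //.
by congr (- limf_esup _ _); apply: funext => x /=; rewrite muleN.
Qed.

Lemma limf_esup_cvg {F} {FF : ProperFilter F} {f : X -> R} {l : R} :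
  f @ F --> l -> limf_esup (fun x => (f x)%:E) F = l%:E.
Proof.
move=> fl; apply/eqP; rewrite eq_le; apply/andP; split.
- apply/lee_addgt0Pr => e e0; rewrite limf_esupE.
  pose V := [set x | `|l - f x| < e]%R.
  apply: (@le_trans _ _ (ereal_sup ((fun x => (f x)%:E) @` V))).
    by apply: ereal_inf_lbound; exists V => //; apply: cvgr_dist_lt.
  apply: ge_ereal_sup => _ [x /= lx <-]; rewrite -EFinD lee_fin.
  by move: lx; rewrite /V /= distrC ltr_distl addrC => /andP[_ /ltW].
- rewrite limf_esupE; apply: le_ereal_inf_tmp => _ [V FV <-].
  apply/lee_addgt0Pr => e e0.
  have [x [Vx lx]] := filter_ex (filterI FV (cvgr_dist_lt _ _ fl _ e0)).
  apply: (@le_trans _ _ ((f x)%:E + e%:E)).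
    by rewrite -EFinD lee_fin; move: lx; rewrite ltr_distl => /andP[_ /ltW].
  by rewrite leeD2r //; apply: ereal_sup_ubound; exists x.
Qed.

End limf_esup_einf.

Lemma limf_esup_comp (T U : choiceType) (X : filteredType T)
    (Y : filteredType U) (R : realType) (g : Y -> \bar R) (h : X -> Y)
    (F : set_system X) :
  Filter F -> limf_esup (g \o h) F = limf_esup g (h @ F).
Proof.
move=> FF; apply/eqP; rewrite eq_le !limf_esupE; apply/andP; split.
- apply: le_ereal_inf_tmp => _ [V FV <-].
  apply: (@le_trans _ _ (ereal_sup ((g \o h) @` (h @^-1` V)))).
    by apply: ereal_inf_lbound; exists (h @^-1` V).
  by apply: ge_ereal_sup => _ [x Vx <-]; apply: ereal_sup_ubound; exists (h x).
- apply: le_ereal_inf_tmp => _ [V FV <-].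
  have FhV : F (h @^-1` (h @` V)) by apply: filterS FV => x Vx; exists x.
  by apply: ereal_inf_lbound; exists (h @` V); last rewrite image_comp.
Qed.

Lemma lee_mul1D (R : realType) (x y : \bar R) :
  (forall eta : R, 0 < eta -> (x <= (1 + eta)%:E * y)%E) -> (x <= y)%E.
Proof.
case: y => [r| |] xy; last 2 first.
- by rewrite leey.
- by have := xy 1 ltr01; rewrite gt0_muleNy // lte_fin addr_gt0.
have [r0|r0] := leP r 0.
  apply: le_trans (xy 1 ltr01) _.
  by rewrite -EFinM lee_fin mulrDl mul1r gerDl.
apply/lee_addgt0Pr => e e0; apply: le_trans (xy (e / r) (divr_gt0 e0 r0)) _.
by rewrite -EFinM -EFinD lee_fin mulrDl mul1r divfK ?gt_eqF.
Qed.

Section at_right0_scale.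
Context {R : realType}.

Lemma near_at_right0P (P : R -> Prop) : (\forall e \near 0^'+, P e) <->
  exists2 del : R, 0 < del & forall e, 0 < e < del -> P e.
Proof.
split.
- move=> /nbhs_ballP [del /= del0 Pdel]; exists del => // e /andP[e0 edel].
  by apply: Pdel => //; rewrite /ball /= sub0r normrN gtr0_norm.
- move=> [del del0 Pdel]; apply/nbhs_ballP; exists del => //= e.
  rewrite /ball /= sub0r normrN => edel e0; apply: Pdel.
  by rewrite e0 -(gtr0_norm e0).
Qed.

Lemma near_at_right0_scale (c : R) (P : R -> Prop) : 0 < c ->
  (\forall e \near 0^'+, P e) -> \forall e \near 0^'+, P (e * c).
Proof.
move=> c0 /near_at_right0P [del del0 Pdel]; apply/near_at_right0P.
exists (del / c); first by rewrite divr_gt0.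
by move=> e /andP[e0 edel]; apply: Pdel; rewrite mulr_gt0 //= -ltr_pdivlMr.
Qed.

Lemma at_right0_scale (c : R) : 0 < c -> (fun e : R => e * c) @ 0^'+ = 0^'+.
Proof.
move=> c0; apply/seteqP; split => V /=; last exact: near_at_right0_scale.
move=> /(@near_at_right0_scale c^-1); rewrite invr_gt0 => /(_ c0).
by apply: filterS => e /=; rewrite -mulrA mulVf ?mulr1 // gt_eqF.
Qed.

Lemma limf_esup_scale (c : R) (f : R -> \bar R) : 0 < c ->
  limf_esup (fun e : R => f (e * c)) 0^'+ = limf_esup f 0^'+.
Proof.
by move=> c0; rewrite -[in RHS](at_right0_scale _ c0) -limf_esup_comp.
Qed.

Lemma limf_einf_scale (c : R) (f : R -> \bar R) : 0 < c ->
  limf_einf (fun e : R => f (e * c)) 0^'+ = limf_einf f 0^'+.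
Proof. by move=> c0; congr (- _)%E; exact: limf_esup_scale. Qed.

End at_right0_scale.

(* [L] stands for [limf_esup] or [limf_einf] along [0^'+]. *)
Section rescaled_sandwich.
Variables (R : realType) (L : (R -> \bar R) -> \bar R).
Hypotheses (L_le : forall f g, (\forall e \near 0^'+, (f e <= g e)%E) -> (L f <= L g)%E)
  (LZl : forall k f, 0 < k -> L (fun e => k%:E * f e)%E = (k%:E * L f)%E)
  (L_scale : forall c f, 0 < c -> L (fun e => f (e * c)) = L f).

Lemma le_rescaled (g : R -> \bar R) (a : R -> R) (c : R) : 0 < c ->
  (\forall e \near 0^'+, (0 <= g e)%E) ->
  (forall eta, 0 < eta -> \forall e \near 0^'+, a e <= 1 + eta) ->
  (L (fun e => (a e)%:E * g (e * c)%R) <= L g)%E.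
Proof.
move=> c0 g0 a1; apply: lee_mul1D => eta eta0.
rewrite -(L_scale _ g c0) -LZl ?addr_gt0 //; apply: L_le.
have gc0 : \forall e \near 0^'+, (0 <= g (e * c)%R)%E.
  exact: (near_at_right0_scale c (fun e => 0 <= g e)%E c0 g0).
near=> e; apply: lee_wpmul2r; first by near: e.
by rewrite lee_fin; near: e; exact: a1.
Unshelve. all: end_near.
Qed.

Lemma rescaled_sandwich (G Q H : R -> \bar R) (a : R -> R) (c : R) : 0 < c ->
  (\forall e \near 0^'+, (0 <= G e)%E) ->
  (\forall e \near 0^'+, (G e <= Q e)%E) ->
  (\forall e \near 0^'+, (Q e <= H e)%E) ->
  (\forall e \near 0^'+, (H e <= (a e)%:E * G (e * c)%R)%E) ->
  (forall eta, 0 < eta -> \forall e \near 0^'+, a e <= 1 + eta) ->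
  L Q = L G /\ L H = L G.
Proof.
move=> c0 G0 /L_le GQ /L_le QH /L_le HG a1.
have {}HG := le_trans HG (le_rescaled _ _ _ c0 G0 a1).
by split; apply/eqP; rewrite eq_le ?(le_trans QH HG) ?(le_trans GQ QH) ?GQ ?HG.
Qed.

End rescaled_sandwich.

Lemma limf_rescaled_sandwich {R : realType} (G Q H : R -> \bar R) (a : R -> R)
    (c : R) : 0 < c ->
  (\forall e \near 0^'+, (0 <= G e)%E) ->
  (\forall e \near 0^'+, (G e <= Q e)%E) ->
  (\forall e \near 0^'+, (Q e <= H e)%E) ->
  (\forall e \near 0^'+, (H e <= (a e)%:E * G (e * c)%R)%E) ->
  (forall eta, 0 < eta -> \forall e \near 0^'+, a e <= 1 + eta) ->
  [/\ limf_esup Q 0^'+ = limf_esup G 0^'+, limf_esup H 0^'+ = limf_esup G 0^'+,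
      limf_einf Q 0^'+ = limf_einf G 0^'+ & limf_einf H 0^'+ = limf_einf G 0^'+].
Proof.
move=> c0 G0 GQ QH HG a1.
have [Qsup Hsup] := @rescaled_sandwich R (fun f => limf_esup f 0^'+)
  (fun f g => le_limf_esup _ f g _) (fun k f => limf_esupZl _ f k)
  (fun c f => limf_esup_scale c f) G Q H a c c0 G0 GQ QH HG a1.
have [Qinf Hinf] := @rescaled_sandwich R (fun f => limf_einf f 0^'+)
  (fun f g => le_limf_einf _ f g _) (fun k f => limf_einfZl _ f k)
  (fun c f => limf_einf_scale c f) G Q H a c c0 G0 GQ QH HG a1.
by split.
Qed.

Lemma ln_ratio_near0 {R : realType} (c eta : R) : 0 < c -> 0 < eta ->
  \forall e \near 0^'+, ln (1 / (e * c)) / ln (1 / e) <= 1 + eta.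
Proof.
move=> c0 eta0.
have /cvgrNyPle/(_ (- (`|ln c| / eta) - 1)) lne_small := @lnNy R.
near=> e; have e0 : 0 < e by near: e; exact: nbhs_right_gt.
have lne : ln e <= - (`|ln c| / eta) - 1 by near: e.
have lnc : - `|ln c| <= ln c by rewrite lerNl -normrN ler_norm.
have lnc_eta : 0 <= `|ln c| / eta by rewrite divr_ge0 // ltW.
rewrite !div1r !lnV ?posrE ?mulr_gt0 // lnM ?posrE //.
rewrite ler_pdivrMr ?oppr_gt0; last by lra.
have : eta * ln e <= - `|ln c| - eta.
  by rewrite -(divfK (lt0r_neq0 eta0) `|ln c|); nra.
lra.
Unshelve. all: end_near.
Qed.

Section natr_inf_sup_ln.
Context {R : realType}.

Lemma inf_natr (P : set nat) (n0 : nat) : P n0 -> exists n,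
  [/\ P n, forall m, P m -> (n <= m)%N & inf [set m%:R | m in P] = n%:R :> R].
Proof.
move=> Pn0; have [n [Pn nmin]] := @nat_has_minimum P (ex_intro _ n0 Pn0).
exists n; split => //; apply/eqP; rewrite eq_le; apply/andP; split.
  apply: ge_inf; last by exists n.
  by exists 0 => _ [m _ <-]; rewrite ler0n.
apply: lb_le_inf; first by exists n%:R, n.
by move=> _ [m Pm <-]; rewrite ler_nat; exact: nmin.
Qed.

Lemma sup_natr (P : set nat) (n0 B : nat) : P n0 -> (forall m, P m -> (m <= B)%N) ->
  exists n,
  [/\ P n, forall m, P m -> (m <= n)%N & sup [set m%:R | m in P] = n%:R :> R].
Proof.
move=> Pn0 PB.
have exP : exists i, `[< P i >] by exists n0; apply/asboolP.
have ubP i : `[< P i >] -> (i <= B)%N by move=> /asboolP; exact: PB.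
have [n /asboolP Pn nmax] := ex_maxnP exP ubP.
have {}nmax m : P m -> (m <= n)%N by move=> Pm; apply: nmax; apply/asboolP.
exists n; split => //; apply/eqP; rewrite eq_le; apply/andP; split.
  apply: ge_sup; first by exists n%:R, n.
  by move=> _ [m Pm <-]; rewrite ler_nat; exact: nmax.
apply: ub_le_sup; last by exists n.
by exists B%:R => _ [m Pm <-]; rewrite ler_nat; exact: PB.
Qed.

(* Since [ln 0 = 0], logarithms of cardinalities are nonnegative. *)
Lemma ln_natr_ge0 (n : nat) : 0 <= ln (n%:R : R).
Proof. by case: n => [|n]; [rewrite ln0 | apply: ln_ge0; rewrite ler1n]. Qed.

Lemma ler_ln_natr (m n : nat) : (m <= n)%N -> ln (m%:R : R) <= ln n%:R.
Proof.
case: m => [|m] mn; first by rewrite ln0 // ln_natr_ge0.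
by rewrite ler_ln ?posrE ?ltr0n ?ler_nat // (leq_trans _ mn).
Qed.

Lemma ln_natrM_le (m n : nat) : ln ((m * n)%:R : R) <= ln m%:R + ln n%:R.
Proof.
case: m => [|m]; first by rewrite mul0n ln0 // add0r ln_natr_ge0.
case: n => [|n]; first by rewrite muln0 ln0 // addr0 ln_natr_ge0.
by rewrite natrM lnM ?posrE ?ltr0n.
Qed.

End natr_inf_sup_ln.

Section subadditive_limit.
Variables (R : realType) (f : R -> R).
Hypotheses (f_ge0 : forall t, 0 <= t -> 0 <= f t)
  (f_nondecr : forall s t, 0 <= s -> s <= t -> f s <= f t)
  (f_subadd : forall s t, 0 <= s -> 0 <= t -> f (s + t) <= f s + f t).

Lemma subadditive_le_mulrn (T t : R) (k : nat) : 0 < T ->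
  0 <= t <= k.+1%:R * T -> f t <= k.+1%:R * f T.
Proof.
move=> T0; elim: k t => [|k IH] t /andP[t0 tk].
  by rewrite mul1r; apply: f_nondecr; rewrite // -(mul1r T).
have fT0 : 0 <= f T by rewrite f_ge0 // ltW.
have [tT|Tt] := leP t T.
  by apply: le_trans (f_nondecr _ _ t0 tT) _; rewrite ler_peMl // ler1n.
have -> : t = T + (t - T) by rewrite addrC subrK.
rewrite [X in _ <= X](_ : _ = f T + k.+1%:R * f T); last first.
  by rewrite -natr1 mulrDl mul1r addrC.
apply: le_trans (f_subadd _ _ (ltW T0) _) _; first by rewrite subr_ge0 ltW.
rewrite lerD2l; apply: IH; rewrite subr_ge0 ltW //= lerBlDl.
by move: tk; rewrite -natr1 mulrDl mul1r addrC.
Qed.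

Lemma subadditive_div_le (T t : R) : 0 < T -> 0 < t ->
  f t / t <= f T / T + f T / t.
Proof.
move=> T0 t0; have fT0 : 0 <= f T by rewrite f_ge0 // ltW.
have /andP[truncT truncT1] := truncn_itv (divr_ge0 (ltW t0) (ltW T0)).
have ft : f t <= (Num.truncn (t / T)).+1%:R * f T.
  by apply: subadditive_le_mulrn; rewrite // (ltW t0) ltW // -ltr_pdivrMr.
rewrite ler_pdivrMr // (_ : _ * t = (t / T + 1) * f T); last first.
  by field; rewrite gt_eqF //= gt_eqF.
apply: le_trans ft _; apply: ler_wpM2r => //.
by rewrite -natr1 lerD2r.
Qed.

Lemma subadditive_div_cvg : exists l : R, (fun t => f t / t) @ +oo --> l.
Proof.
pose S := [set f t / t | t in [set t : R | 0 < t]].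
have S0 : S !=set0 by exists (f 1 / 1), 1 => //=.
have Slb : has_lbound S.
  by exists 0 => _ [t /= t0 <-]; rewrite divr_ge0 // ?f_ge0 // ltW.
exists (inf S); apply/cvgrPdist_lt => e e0.
have infe : inf S < inf S + e / 2 by rewrite ltrDl divr_gt0.
have [_ [T /= T0 <-] ST] := inf_lt S0 infe.
near=> t; have t0 : 0 < t by near: t; apply: nbhs_pinfty_gt.
have lo : inf S <= f t / t by apply: (ge_inf Slb); exists t.
have hi := subadditive_div_le _ _ T0 t0.
have small : f T / t < e / 2.
  have : f T / (e / 2) < t by near: t; apply: nbhs_pinfty_gt; rewrite num_real.
  by rewrite !ltr_pdivrMr ?divr_gt0 // mulrC.
rewrite ltr_distlC; apply/andP; split; lra.
Unshelve. all: end_near.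
Qed.

End subadditive_limit.

Section flow.
Variables (R : realType) (X : Type) (d : X -> X -> R) (phi : X -> R -> X).
Hypotheses (d_metric : is_metric d) (d_compact : metric_compact d)
  (phi_flow : is_flow d phi).
Local Notation dt := (dist_t d phi).

Lemma metric_xx x : d x x = 0.
Proof. by case: d_metric => d0 _ _; apply/d0. Qed.

Lemma metricC x y : d x y = d y x.
Proof. by case: d_metric. Qed.

Lemma metric_triangle x y z : d x z <= d x y + d y z.
Proof. by case: d_metric. Qed.

Lemma metric_ge0 x y : 0 <= d x y.
Proof.
have := metric_triangle x y x.
by rewrite metric_xx (metricC y x) -mulr2n -mulr_natr pmulr_lge0.
Qed.

Lemma metric_open_ball x r : metric_open d [set y | d x y < r].
Proof.
move=> y /= xy; exists (r - d x y); first by rewrite subr_gt0.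
by move=> z yz; apply: le_lt_trans (metric_triangle x y z) _; rewrite -ltrBrDl.
Qed.

Lemma metric_compact_bounded : exists B : R, forall x y, d x y <= B.
Proof.
have [|n [c cover]] := d_compact _ _ (fun x => metric_open_ball x 1).
  by move=> x; exists x => /=; rewrite metric_xx.
exists (\big[Num.max/0]_(ij : 'I_n * 'I_n) d (c ij.1) (c ij.2) + 2) => x y.
have [i /= xi] := cover x; have [j /= yj] := cover y.
have cij := le_bigmax 0 (fun ij : 'I_n * 'I_n => d (c ij.1) (c ij.2)) (i, j).
have := metric_triangle x (c i) y; have := metric_triangle (c i) (c j) y.
rewrite metricC in xi; lra.
Qed.

Lemma dist_t_ub t x y s : 0 <= s <= t -> d (phi x s) (phi y s) <= dt t x y.
Proof.
have [B dB] := metric_compact_bounded.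
by move=> st; apply: ub_le_sup; [exists B => _ [r _ <-] | exists s].
Qed.

Lemma dist_t_le t x y M : 0 <= t ->
  (forall s, 0 <= s <= t -> d (phi x s) (phi y s) <= M) -> dt t x y <= M.
Proof.
move=> t0 dM; apply: ge_sup; last by move=> _ [s st <-]; exact: dM.
by exists (d (phi x 0) (phi y 0)), 0; rewrite //= lexx.
Qed.

Lemma flow0 x : phi x 0 = x.
Proof. by case: phi_flow. Qed.

Lemma le_dist_t t x y : 0 <= t -> d x y <= dt t x y.
Proof.
by move=> t0; rewrite -{1}(flow0 x) -{1}(flow0 y); apply: dist_t_ub; rewrite lexx.
Qed.

Lemma dist_t_xx t x : 0 <= t -> dt t x x = 0.
Proof.
move=> t0; apply/eqP; rewrite eq_le (le_trans (metric_ge0 x x)) ?le_dist_t //.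
by rewrite andbT; apply: dist_t_le => // s _; rewrite metric_xx.
Qed.

Lemma dist_tC t x y : 0 <= t -> dt t x y = dt t y x.
Proof.
move=> t0; apply/eqP; rewrite eq_le.
by apply/andP; split; apply: dist_t_le => // s st; rewrite metricC dist_t_ub.
Qed.

Lemma dist_t_triangle t x y z : 0 <= t -> dt t x z <= dt t x y + dt t y z.
Proof.
move=> t0; apply: dist_t_le => // s st.
by apply: le_trans (metric_triangle _ (phi y s) _) _; apply: lerD; exact: dist_t_ub.
Qed.

Lemma le_dist_t_time t t' x y : 0 <= t -> t <= t' -> dt t x y <= dt t' x y.
Proof.
move=> t0 tt'; apply: dist_t_le => // s /andP[s0 st].
by apply: dist_t_ub; rewrite s0 (le_trans st tt').
Qed.

Lemma dist_tD t s x y : 0 <= t -> 0 <= s ->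
  dt (t + s) x y <= Num.max (dt t x y) (dt s (phi x t) (phi y t)).
Proof.
move=> t0 s0; apply: dist_t_le; first exact: addr_ge0.
move=> r /andP[r0 rts]; rewrite le_max.
have [rt|tr] := leP r t; first by rewrite dist_t_ub // r0 rt.
case: phi_flow => _ _ phiD; rewrite -(subrK t r) (phiD x) (phiD y) dist_t_ub ?orbT //.
by rewrite subr_ge0 (ltW tr) lerBlDr addrC.
Qed.

Lemma flow_continuous t x e : 0 < e ->
  exists2 del : R, 0 < del & forall y, d x y < del -> d (phi x t) (phi y t) < e.
Proof.
case: phi_flow => phi_cont _ _ e0; have [del del0 close] := phi_cont x t e e0.
by exists del => // y xy; apply: close; rewrite ?subrr ?normr0.
Qed.

(* Tube lemma over the compact time segment [0, t]. *)
Lemma dist_t_continuous t y r : 0 <= t -> 0 < r ->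
  exists2 del : R, 0 < del & forall z, d y z < del -> dt t y z <= r.
Proof.
move=> t0 r0.
pose P (del s : R) := forall z, d y z < del -> d (phi y s) (phi z s) < r.
have near_P s : `[0, t]%classic s -> \forall s' \near s & del \near 0^'+, P del s'.
  move=> _; case: phi_flow => phi_cont _ _.
  have [del del0 close] := phi_cont y s (r / 2) (divr_gt0 r0 (ltr0Sn _ 1)).
  exists ([set s' | `|s - s'| < del], [set del' | del' <= del]).
    split; first by apply/nbhs_ballP; exists del.
    by apply/near_at_right0P; exists del => // e /andP[_ /ltW].
  case=> s' del' [/= ss' del'del] z yz.
  have := close z s' (lt_le_trans yz del'del) ss'.
  have := close y s'; rewrite metric_xx metricC => /(_ del0 ss').
  have := metric_triangle (phi y s') (phi y s) (phi z s'); lra.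
have [del0 del00 del0P] := (near_at_right0P _).1
  ((compact_near_coveringP _).1 (@segment_compact R 0 t) R 0^'+ P _ near_P).
have del0_half : 0 < del0 / 2 < del0.
  by rewrite divr_gt0 //= ltr_pdivrMr // ltr_pMr // ltr1n.
exists (del0 / 2); first by case/andP: del0_half.
by move=> z yz; apply: dist_t_le => // s st; apply/ltW/(del0P _ del0_half).
Qed.

Lemma metric_open_dist_t_ball t x r : 0 <= t ->
  metric_open d [set z | dt t x z < r].
Proof.
move=> t0 z /= xz.
have rxz : 0 < (r - dt t x z) / 2 by rewrite divr_gt0 // subr_gt0.
have [del del0 close] := dist_t_continuous t z _ t0 rxz.
exists del => // w zw; have := close w zw; have := dist_t_triangle t x z w t0; lra.
Qed.

Definition has_small_cover t eps n := exists U : 'I_n -> set X,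
  [/\ forall i, metric_open d (U i), forall x, exists i, U i x &
      forall i, (diam_t d phi t (U i) < eps%:E)%E].

Definition has_spanning_set t eps n :=
  exists E : 'I_n -> X, forall x, exists i, dt t x (E i) < eps.

Definition has_separated_set t eps n := exists F : 'I_n -> X,
  injective F /\ forall i j, i != j -> eps <= dt t (F i) (F j).

Lemma diam_t_le t (U : set X) M :
  (forall y z, U y -> U z -> dt t y z <= M) -> (diam_t d phi t U <= M%:E)%E.
Proof.
by move=> UM; apply: ge_ereal_sup => _ [y [z [Uy Uz ->]]]; rewrite lee_fin UM.
Qed.

Lemma dist_t_le_diam t (U : set X) y z : U y -> U z ->
  ((dt t y z)%:E <= diam_t d phi t U)%E.
Proof. by move=> Uy Uz; apply: ereal_sup_ubound; exists y, z. Qed.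

Lemma has_spanning_set_exists t eps : 0 <= t -> 0 < eps ->
  exists n, has_spanning_set t eps n.
Proof.
move=> t0 eps0.
have [|n [c cover]] := d_compact _ _ (fun x => metric_open_dist_t_ball t x eps t0).
  by move=> x; exists x => /=; rewrite dist_t_xx.
by exists n, c => x; have [i xi] := cover x; exists i; rewrite dist_tC.
Qed.

Lemma has_small_cover_spanning t eps n : 0 <= t -> 0 < eps ->
  has_spanning_set t (eps / 3) n -> has_small_cover t eps n.
Proof.
move=> t0 eps0 [E spanE].
exists (fun i => [set z | dt t (E i) z < eps / 3]); split.
- by move=> i; exact: metric_open_dist_t_ball.
- by move=> x; have [i xi] := spanE x; exists i => /=; rewrite dist_tC.
- move=> i; apply: (@le_lt_trans _ _ (2 * eps / 3)%:E); last by rewrite lte_fin; lra.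
  apply: diam_t_le => y z /= yE zE; have := dist_t_triangle t y (E i) z t0.
  rewrite (dist_tC t y (E i) t0); lra.
Qed.

Lemma separated_le_cover t eps n m :
  has_separated_set t eps n -> has_small_cover t eps m -> (n <= m)%N.
Proof.
move=> [F [F_inj F_sep]] [U [_ U_cover U_diam]].
pose k i := projT1 (cid (U_cover (F i))).
have Uk i : U (k i) (F i) by rewrite /k; case: cid.
suff k_inj : injective k by have := leq_card k k_inj; rewrite !card_ord.
move=> i j kij; apply/eqP; apply: contraT => ij.
have UFj : U (k i) (F j) by rewrite kij.
have := le_lt_trans (dist_t_le_diam t _ _ _ (Uk i) UFj) (U_diam (k i)).
by rewrite lte_fin ltNge F_sep.
Qed.

(* A point eps-far from the whole set could be added to it. *)
Lemma spanning_maximal_separated t eps n : 0 <= t -> 0 < eps ->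
  has_separated_set t eps n ->
  (forall m, has_separated_set t eps m -> (m <= n)%N) ->
  has_spanning_set t eps n.
Proof.
move=> t0 eps0 [F [F_inj F_sep]] F_max; exists F => x.
apply: contrapT => /forallNP x_far.
have {}x_far i : eps <= dt t x (F i) by rewrite leNgt; apply/negP/x_far.
pose F' (i : 'I_n.+1) := if unlift ord_max i is Some j then F j else x.
have F'_lift j : F' (lift ord_max j) = F j by rewrite /F' liftK.
have F'_max : F' ord_max = x by rewrite /F' unlift_none.
suff : has_separated_set t eps n.+1 by move/F_max; rewrite ltnn.
exists F'; split.
- move=> i1 i2; case: (unliftP ord_max i1) => [j1 ->|->];
    case: (unliftP ord_max i2) => [j2 ->|->]; rewrite ?F'_lift ?F'_max //.
  + by move/F_inj ->.
  + by move=> Fx; have := x_far j1; rewrite Fx dist_t_xx // leNgt eps0.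
  + by move=> xF; have := x_far j2; rewrite xF dist_t_xx // leNgt eps0.
- move=> i1 i2; case: (unliftP ord_max i1) => [j1 ->|->];
    case: (unliftP ord_max i2) => [j2 ->|->]; rewrite ?F'_lift ?F'_max ?eqxx //.
  + by rewrite (inj_eq lift_inj); exact: F_sep.
  + by rewrite dist_tC.
Qed.

Lemma has_small_cover_card t eps (T : finType) (U : T -> set X) :
  (forall i, metric_open d (U i)) -> (forall x, exists i, U i x) ->
  (forall i, (diam_t d phi t (U i) < eps%:E)%E) -> has_small_cover t eps #|T|.
Proof.
move=> U_open U_cover U_diam; exists (U \o enum_val).
split=> [k|x|k]; [exact: U_open | | exact: U_diam].
by have [i xi] := U_cover x; exists (enum_rank i); rewrite /= enum_rankK.
Qed.

Lemma has_small_cover_mul t s eps m n : 0 <= t -> 0 <= s ->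
  has_small_cover t eps m -> has_small_cover s eps n ->
  has_small_cover (t + s) eps (m * n).
Proof.
move=> t0 s0 [U [U_open U_cover U_diam]] [V [V_open V_cover V_diam]].
rewrite -[m]card_ord -[n]card_ord -card_prod.
apply: (has_small_cover_card _ _ _
  (fun ij : 'I_m * 'I_n => U ij.1 `&` [set x | V ij.2 (phi x t)])).
- move=> [i j] x [Ux Vx]; have [r1 r10 Ur1] := U_open i x Ux.
  have [r2 r20 Vr2] := V_open j (phi x t) Vx.
  have [del del0 close] := flow_continuous t x _ r20.
  exists (Num.min r1 del); first by rewrite lt_min r10 del0.
  by move=> y; rewrite lt_min => /andP[xy1 xy2]; split; [exact: Ur1|exact/Vr2/close].
- by move=> x; have [i xi] := U_cover x; have [j xj] := V_cover (phi x t); exists (i, j).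
- move=> [i j] /=.
  apply: (@le_lt_trans _ _ (Order.max (diam_t d phi t (U i)) (diam_t d phi s (V j))));
    last by rewrite gt_max U_diam V_diam.
  apply: ge_ereal_sup => _ [y [z [[Uy Vy] [Uz Vz] ->]]].
  rewrite le_max; have := dist_tD t s y z t0 s0; rewrite le_max => /orP[yz|yz].
  + apply/orP; left; apply: le_trans _ (dist_t_le_diam t _ _ _ Uy Uz).
    by rewrite lee_fin.
  + apply/orP; right; apply: le_trans _ (dist_t_le_diam s (V j) _ _ Vy Vz).
    by rewrite lee_fin.
Qed.

Lemma has_small_cover_time t t' eps n : 0 <= t -> t <= t' ->
  has_small_cover t' eps n -> has_small_cover t eps n.
Proof.
move=> t0 tt' [U [U_open U_cover U_diam]]; exists U; split => // i.
apply: le_lt_trans (U_diam i); apply: ge_ereal_sup => _ [y [z [Uy Uz ->]]].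
by apply: le_trans (dist_t_le_diam t' _ _ _ Uy Uz); rewrite lee_fin le_dist_t_time.
Qed.

Lemma cover_numE t eps : 0 <= t -> 0 < eps -> exists n,
  [/\ has_small_cover t eps n, forall m, has_small_cover t eps m -> (n <= m)%N
    & cover_num d phi t eps = n%:R].
Proof.
move=> t0 eps0; have eps30 : 0 < eps / 3 by rewrite divr_gt0.
have [n0 span_n0] := has_spanning_set_exists _ _ t0 eps30.
exact: inf_natr _ _ (has_small_cover_spanning _ _ _ t0 eps0 span_n0).
Qed.

Lemma span_numE t eps : 0 <= t -> 0 < eps -> exists n,
  [/\ has_spanning_set t eps n, forall m, has_spanning_set t eps m -> (n <= m)%N
    & span_num d phi t eps = n%:R].
Proof.
move=> t0 eps0; have [n0 span_n0] := has_spanning_set_exists _ _ t0 eps0.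
exact: inf_natr _ _ span_n0.
Qed.

Lemma sep_numE t eps : 0 <= t -> 0 < eps -> exists n,
  [/\ has_separated_set t eps n, forall m, has_separated_set t eps m -> (m <= n)%N
    & sep_num d phi t eps = n%:R].
Proof.
move=> t0 eps0; have [N [cover_N _ _]] := cover_numE _ _ t0 eps0.
have sep0 : has_separated_set t eps 0.
  by exists (fun i : 'I_0 => False_rect X (notF (ltn_ord i))); split => -[].
exact: sup_natr _ _ _ sep0 (fun m sep_m => separated_le_cover _ _ _ _ sep_m cover_N).
Qed.

Lemma ln_nums_le t eps : 0 <= t -> 0 < eps -> [/\
  0 <= ln (span_num d phi t eps),
  ln (span_num d phi t eps) <= ln (sep_num d phi t eps),
  ln (sep_num d phi t eps) <= ln (cover_num d phi t eps) &
  ln (cover_num d phi t eps) <= ln (span_num d phi t (eps / 3))].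
Proof.
move=> t0 eps0; have eps30 : 0 < eps / 3 by rewrite divr_gt0.
have [K [_ K_min ->]] := span_numE _ _ t0 eps0.
have [N [sep_N N_max ->]] := sep_numE _ _ t0 eps0.
have [M [cover_M M_min ->]] := cover_numE _ _ t0 eps0.
have [K' [span_K' _ ->]] := span_numE _ _ t0 eps30.
split; rewrite ?ln_natr_ge0 //; apply: ler_ln_natr.
- by apply/K_min/spanning_maximal_separated.
- exact: separated_le_cover _ _ _ _ sep_N cover_M.
- by apply/M_min/has_small_cover_spanning.
Qed.

Lemma ln_cover_num_subadd t s eps : 0 <= t -> 0 <= s -> 0 < eps ->
  ln (cover_num d phi (t + s) eps) <=
  ln (cover_num d phi t eps) + ln (cover_num d phi s eps).
Proof.
move=> t0 s0 eps0.
have [M [cover_M _ ->]] := cover_numE _ _ t0 eps0.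
have [N [cover_N _ ->]] := cover_numE _ _ s0 eps0.
have [P [_ P_min ->]] := cover_numE _ _ (addr_ge0 t0 s0) eps0.
apply: le_trans _ (ln_natrM_le M N); apply/ler_ln_natr/P_min.
exact: has_small_cover_mul.
Qed.

Lemma ln_cover_num_nondecr t t' eps : 0 <= t -> t <= t' -> 0 < eps ->
  ln (cover_num d phi t eps) <= ln (cover_num d phi t' eps).
Proof.
move=> t0 tt' eps0.
have [M [_ M_min ->]] := cover_numE _ _ t0 eps0.
have [N [cover_N _ ->]] := cover_numE _ _ (le_trans t0 tt') eps0.
by apply/ler_ln_natr/M_min; exact: has_small_cover_time cover_N.
Qed.

Definition cover_rate eps := lim ((fun t => ln (cover_num d phi t eps) / t) @ +oo).

Definition sep_rate eps :=
  limf_esup (fun t => (ln (sep_num d phi t eps) / t)%:E) +oo.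

Lemma cover_rate_cvg eps : 0 < eps ->
  (fun t => ln (cover_num d phi t eps) / t) @ +oo --> cover_rate eps.
Proof.
move=> eps0.
have [|||l cvg_l] := @subadditive_div_cvg R (fun t => ln (cover_num d phi t eps)).
- move=> t t0; have [span0 span_sep sep_cover _] := ln_nums_le _ _ t0 eps0.
  exact: le_trans span0 (le_trans span_sep sep_cover).
- by move=> s t s0 st; exact: ln_cover_num_nondecr.
- by move=> s t s0 t0; exact: ln_cover_num_subadd.
by rewrite /cover_rate (cvg_lim _ cvg_l).
Qed.

Lemma le_limf_esup_div (u v : R -> R) : (forall t, 0 < t -> u t <= v t) ->
  (limf_esup (fun t => (u t / t)%:E) +oo%R <= limf_esup (fun t => (v t / t)%:E) +oo%R)%E.
Proof.
move=> uv; apply: le_limf_esup; near=> t.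
have t0 : 0 < t by near: t; apply: nbhs_pinfty_gt; rewrite num_real.
by rewrite lee_fin ler_pM2r ?invr_gt0 // uv.
Unshelve. all: end_near.
Qed.

Lemma span_rate_ge0 eps : 0 < eps -> (0 <= span_rate d phi eps)%E.
Proof.
move=> eps0; have -> : 0%E = limf_esup (fun t : R => (0 / t)%:E) +oo.
  by under eq_fun do rewrite mul0r; rewrite (limf_esup_cvg (cvg_cst 0)).
apply: le_limf_esup_div => t /ltW t0.
by have [] := ln_nums_le _ _ t0 eps0.
Qed.

Lemma span_rate_le_sep_rate eps : 0 < eps -> (span_rate d phi eps <= sep_rate eps)%E.
Proof.
move=> eps0; apply: le_limf_esup_div => t /ltW t0.
by have [] := ln_nums_le _ _ t0 eps0.
Qed.

Lemma sep_rate_le_cover_rate eps : 0 < eps -> (sep_rate eps <= (cover_rate eps)%:E)%E.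
Proof.
move=> eps0; rewrite -(limf_esup_cvg (cover_rate_cvg _ eps0)).
apply: le_limf_esup_div => t /ltW t0.
by have [] := ln_nums_le _ _ t0 eps0.
Qed.

Lemma cover_rate_le_span_rate eps : 0 < eps ->
  ((cover_rate eps)%:E <= span_rate d phi (eps / 3))%E.
Proof.
move=> eps0; rewrite -(limf_esup_cvg (cover_rate_cvg _ eps0)).
apply: le_limf_esup_div => t /ltW t0.
by have [] := ln_nums_le _ _ t0 eps0.
Qed.

Definition span_ratio eps := (span_rate d phi eps * (ln (1 / eps))^-1%:E)%E.

Definition sep_ratio eps :=
  limf_esup (fun t => (ln (sep_num d phi t eps) / (t * ln (1 / eps)))%:E) +oo.

Definition cover_ratio eps :=
  (lim ((fun t => ln (cover_num d phi t eps) / (t * ln (1 / eps))) @ +oo))%:E.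

Lemma cover_ratioE eps : 0 < eps ->
  cover_ratio eps = (cover_rate eps / ln (1 / eps))%:E.
Proof.
move=> eps0; congr EFin; apply: cvg_lim => //.
under eq_fun do rewrite invfM mulrA.
exact: cvgMr_tmp (cover_rate_cvg _ eps0).
Qed.

Lemma sep_ratioE eps : 0 < ln (1 / eps) ->
  sep_ratio eps = ((ln (1 / eps))^-1%:E * sep_rate eps)%E.
Proof.
move=> lneps0; rewrite /sep_rate -limf_esupZl ?invr_gt0 //; congr limf_esup.
by apply: funext => t; rewrite -EFinM invfM; congr EFin; ring.
Qed.

Lemma ratios_sandwich_near0 : [/\
  \forall eps \near 0^'+, (0 <= span_ratio eps)%E,
  \forall eps \near 0^'+, (span_ratio eps <= sep_ratio eps)%E,
  \forall eps \near 0^'+, (sep_ratio eps <= cover_ratio eps)%E &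
  \forall eps \near 0^'+, (cover_ratio eps <=
     (ln (1 / (eps / 3)) / ln (1 / eps))%:E * span_ratio (eps / 3))%E].
Proof.
have near01 : \forall eps \near (0 : R)^'+, 0 < eps < 1.
  by apply: filterS2 (nbhs_right_gt 0) (nbhs_right_lt ltr01) => e e0 e1; apply/andP.
suff sandwich eps : 0 < eps < 1 -> [/\
    (0 <= span_ratio eps)%E, (span_ratio eps <= sep_ratio eps)%E,
    (sep_ratio eps <= cover_ratio eps)%E &
    (cover_ratio eps <=
       (ln (1 / (eps / 3)) / ln (1 / eps))%:E * span_ratio (eps / 3))%E].
  by split; apply: filterS near01 => e /sandwich[].
move=> /andP[eps0 eps1]; have eps30 : 0 < eps / 3 by rewrite divr_gt0.
have ln_inv_gt0 e : 0 < e < 1 -> 0 < ln (1 / e).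
  by move=> /andP[e0 e1]; rewrite div1r ln_gt0 // invf_gt1.
have b0 : 0 < ln (1 / eps) by rewrite ln_inv_gt0 // eps0 eps1.
have b30 : 0 < ln (1 / (eps / 3)).
  apply: ln_inv_gt0; rewrite eps30 /=; apply: le_lt_trans eps1.
  by rewrite ler_pdivrMr // ler_peMr ?(ltW eps0) // ler1n.
have b0' : (0 <= (ln (1 / eps))^-1%:E)%E by rewrite lee_fin invr_ge0 ltW.
rewrite /span_ratio sep_ratioE // cover_ratioE //; split.
- by rewrite mule_ge0 // span_rate_ge0.
- by rewrite muleC; apply: (lee_wpmul2l b0'); exact: span_rate_le_sep_rate.
- by rewrite EFinM muleC; apply: (lee_wpmul2r b0'); exact: sep_rate_le_cover_rate.
rewrite muleCA -EFinM (_ : _ / _ * _ = (ln (1 / eps))^-1); last first.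
  by field; rewrite !lt0r_neq0.
by rewrite EFinM; apply: (lee_wpmul2r b0'); exact: cover_rate_le_span_rate.
Qed.

End flow.

Theorem proposition2p3 (R : realType) (X : Type) (d : X -> X -> R)
    (phi : X -> R -> X) :
  is_metric d -> metric_compact d -> is_flow d phi ->
  [/\ (forall eps : R, 0 < eps -> exists l : R,
         (fun t : R => ln (cover_num d phi t eps) / t) @ +oo --> l),
      upper_mdim_M d phi =
        limf_esup (fun eps : R =>
          (lim ((fun t : R => ln (cover_num d phi t eps) / (t * ln (1 / eps)))
                  @ +oo))%:E) 0^'+,
      upper_mdim_M d phi =
        limf_esup (fun eps : R =>
          limf_esup (fun t : R =>
            (ln (sep_num d phi t eps) / (t * ln (1 / eps)))%:E) +oo) 0^'+,
      lower_mdim_M d phi =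
        limf_einf (fun eps : R =>
          (lim ((fun t : R => ln (cover_num d phi t eps) / (t * ln (1 / eps)))
                  @ +oo))%:E) 0^'+ &
      lower_mdim_M d phi =
        limf_einf (fun eps : R =>
          limf_esup (fun t : R =>
            (ln (sep_num d phi t eps) / (t * ln (1 / eps)))%:E) +oo) 0^'+].
Proof.
move=> d_metric d_compact phi_flow.
have [G0 GQ QH HG] := @ratios_sandwich_near0 _ _ d phi d_metric d_compact phi_flow.
have c0 : 0 < 3^-1 :> R by rewrite invr_gt0.
have [Qsup Hsup Qinf Hinf] := limf_rescaled_sandwich _ _ _ _ _ c0 G0 GQ QH HG
  (fun eta => ln_ratio_near0 _ eta c0).
split; [|exact/esym|exact/esym|exact/esym|exact/esym].
by move=> eps eps0; exists (cover_rate _ _ d phi eps); exact: cover_rate_cvg.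
Qed.
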